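(* Let $\mathcal{G}$ be a simple temporal clique with vertex set $V$, let $X^-$ be the set of emitters produced by the forward construction and $X^+$ the set of collectors produced by the backward construction, and assume $X^-\cup X^+=V$. (i) If there is an emitter $u\in X^-$ with $e^-(u)=\{u,v\}$ such that $\{u,v\}$ is not the edge of smallest label among the edges $\{v,x\}$ with $x\in X^-$, then $\mathcal{G}$ has a $2$-hop dismountable vertex. (ii) If there is a collector $c\in X^+$ with $e^+(c)=\{c,y\}$ such that $\{c,y\}$ is not the edge of largest label among the edges $\{y,z\}$ with $z\in X^+$, then $\mathcal{G}$ has a $2$-hop dismountable vertex.
   Context: A simple temporal clique is a pair $\mathcal{G}=(G,\lambda)$ where $G=(V,E)$ is the complete graph on a finite vertex set $V$ and $\lambda:E\to\mathbb{N}$ assigns to each edge a single integer label such that any two distinct edges sharing an endpoint have different labels; the label of an arc $(x,y)$ is $\lambda(\{x,y\})$. A journey from $x$ to $y$ is a sequence of vertices $x=u_0,\dots,u_k=y$ ($k\ge1$) with $\lambda(\{u_{i-1},u_i\})<\lambda(\{u_i,u_{i+1}\})$ for $1\le i<k$; its length is $k$, its first edge is $\{u_0,u_1\}$ and its last edge is $\{u_{k-1},u_k\}$. For a vertex $v$, $e^-(v)$ (resp. $e^+(v)$) is the edge incident to $v$ with smallest (resp. largest) label. A vertex $x$ is $2$-hop dismountable if there exist vertices $y,z\ne x$ (possibly $y=z$) such that there is a journey of length at most $2$ from $x$ to $y$ whose last edge is $e^-(y)$, and a journey of length at most $2$ from $z$ to $x$ whose first edge is $e^+(z)$. Forward construction: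 let $E^-$ be the set of arcs $(u,v)$ with $\{u,v\}=e^-(v)$, except that if $e^-(u)=e^-(v)=\{u,v\}$ only one of $(u,v),(v,u)$ is included (arbitrarily). Initialize $E^-_T:=E^-$; for every vertex $v$ of out-degree at least $2$ in $(V,E^-)$, with out-arcs $(v,u_1),\dots,(v,u_\ell)$ where $(v,u_\ell)$ has the largest label, for each $i<\ell$: if $u_i$ has out-degree $0$ in $(V,E^-)$ replace $(v,u_i)$ by $(u_i,v)$ in $E^-_T$, otherwise remove $(v,u_i)$ from $E^-_T$. Emitters are vertices of out-degree $0$ in $(V,E^-_T)$. Backward construction: let $E^+$ be the set of arcs $(v,u)$ with $\{u,v\}=e^+(v)$, except that if $e^+(u)=e^+(v)=\{u,v\}$ only one of $(u,v),(v,u)$ is included (arbitrarily). Initialize $E^+_T:=E^+$; for every vertex $v$ of in-degree at least $2$ in $(V,E^+)$, with in-arcs $(u_1,v),\dots,(u_\ell,v)$ where $(u_\ell,v)$ has the smallest label, for each $i<\ell$: if $u_i$ has in-degree $0$ in $(V,E^+)$ replace $(u_i,v)$ by $(v,u_i)$ in $E^+_T$, otherwise remove $(u_i,v)$ from $E^+_T$. Collectors are vertices of in-degree $0$ in $(V,E^+_T)$. *)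

From mathcomp Require Import all_boot.
Set Implicit Arguments. Unset Strict Implicit. Unset Printing Implicit Defensive.

Section TemporalClique.
Variable T : finType.
Variable lam : T -> T -> nat.  (* lam x y = label of the edge {x,y}, x <> y *)

Definition simple_temporal_clique : Prop :=
  (forall x y, lam x y = lam y x) /\
  (forall x y z, x != y -> x != z -> y != z -> lam x y != lam x z).

Definition is_emin (v u : T) : Prop :=
  u != v /\ forall x, x != v -> x != u -> lam v u < lam v x.
Definition is_emax (v u : T) : Prop :=
  u != v /\ forall x, x != v -> x != u -> lam v x < lam v u.

(* journey from x: the vertex sequence x :: s (length = size s >= 1),
   consecutive vertices distinct, labels strictly increasing. *)
Definition is_journey (x : T) (s : seq T) : bool :=
  [&& s != [::], path (fun a b => a != b) x s & sorted ltn (pairmap lam x s)].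

Definition jend (x : T) (s : seq T) : T := last x s.
Definition jsecond (x : T) (s : seq T) : T := head x s.
Definition jpenult (x : T) (s : seq T) : T := nth x (x :: s) (size s).-1.

Definition two_hop_dismountable (x : T) : Prop :=
  (exists y s, y != x /\ is_journey x s /\ size s <= 2 /\ jend x s = y /\
      is_emin y (jpenult x s)) /\
  (exists z s, z != x /\ is_journey z s /\ size s <= 2 /\ jend z s = x /\
      is_emax z (jsecond z s)).

Definition outdeg0 (R : T -> T -> Prop) v := forall u, ~ R v u.
Definition indeg0 (R : T -> T -> Prop) v := forall u, ~ R u v.
Definition outdeg_ge2 (R : T -> T -> Prop) v :=
  exists u1 u2, u1 != u2 /\ R v u1 /\ R v u2.
Definition indeg_ge2 (R : T -> T -> Prop) v :=
  exists u1 u2, u1 != u2 /\ R u1 v /\ R u2 v.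
Definition max_outarc (R : T -> T -> Prop) v u :=
  R v u /\ forall u', R v u' -> u' != u -> lam v u' < lam v u.
Definition min_inarc (R : T -> T -> Prop) v u :=
  R u v /\ forall u', R u' v -> u' != u -> lam u v < lam u' v.

(* Em is an admissible E^- : arcs (u,v) with {u,v} = e^-(v), where in the
   mutual case exactly one of the two arcs is kept (arbitrary choice). *)
Definition Eminus_spec (Em : T -> T -> Prop) : Prop :=
  (forall u v, Em u v -> is_emin v u) /\
  (forall u v, is_emin v u -> ~ is_emin u v -> Em u v) /\
  (forall u v, is_emin v u -> is_emin u v -> (Em u v <-> ~ Em v u)).

Definition Eplus_spec (Ep : T -> T -> Prop) : Prop :=
  (forall v u, Ep v u -> is_emax v u) /\
  (forall v u, is_emax v u -> ~ is_emax u v -> Ep v u) /\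
  (forall v u, is_emax v u -> is_emax u v -> (Ep v u <-> ~ Ep u v)).

(* E^-_T, the result of the forward construction applied to E^- = Em:
   arcs of Em kept (tail of out-degree < 2, or the largest-label out-arc),
   plus reversed arcs (v,u_i) -> (u_i,v) where u_i had out-degree 0. *)
Definition EminusT (Em : T -> T -> Prop) (a b : T) : Prop :=
  (Em a b /\ (~ outdeg_ge2 Em a \/ max_outarc Em a b)) \/
  (Em b a /\ outdeg_ge2 Em b /\ ~ max_outarc Em b a /\ outdeg0 Em a).

Definition EplusT (Ep : T -> T -> Prop) (a b : T) : Prop :=
  (Ep a b /\ (~ indeg_ge2 Ep b \/ min_inarc Ep b a)) \/
  (Ep b a /\ indeg_ge2 Ep a /\ ~ min_inarc Ep a b /\ indeg0 Ep b).

Definition emitter (Em : T -> T -> Prop) (v : T) : Prop := outdeg0 (EminusT Em) v.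
Definition collector (Ep : T -> T -> Prop) (v : T) : Prop := indeg0 (EplusT Ep) v.

End TemporalClique.

From mathcomp Require Import all_boot boolp zify.
Set Implicit Arguments. Unset Strict Implicit. Unset Printing Implicit Defensive.

(* Every emitter is a sink of E^- that receives the arc of its own e^- edge,
   and no vertex sends E^- arcs to two emitters: of two such arcs only the one
   of largest label survives the forward construction, and the other one would
   be reversed into an out-arc of its emitter.  Sending each emitter to the
   tail of that arc thus injects the emitters into the non-sinks, so they form
   at most half of V; dually so do the collectors, and as the two sets cover V,
   no vertex is both.  In (i), the emitter x with lambda(v,x) < lambda(v,u) has
   the journey x v u ending with e^-(u), and since x is not a collector some
   arc of E^+_T enters x, which yields a journey of length at most 2 into x
   starting with an e^+ edge.  Part (ii) is the time-reversed argument. *)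

Section HalfCards.
Variable T : finType.

Lemma card_sinks_private_parent (R : rel T) (A : {set T}) :
  (forall a b, a \in A -> ~~ R a b) ->
  (forall a, a \in A -> exists b, R b a) ->
  (forall a a' b, a \in A -> a' \in A -> R b a -> R b a' -> a = a') ->
  #|A|.*2 <= #|T|.
Proof.
move=> sinkA parentA privateA.
pose N := [set b | [exists a, R b a]].
pose parent a := odflt a [pick b | R b a].
have parentP a : a \in A -> R (parent a) a.
  by move=> /parentA [b Rba]; rewrite /parent; case: pickP => // /(_ b); rewrite Rba.
have A_le_N : #|A| <= #|N|.
  rewrite -(card_in_imset (f := parent)); last first.
    move=> a a' Aa Aa' eq_p; apply: (privateA _ _ (parent a)) => //.
      exact: parentP.
    by rewrite eq_p; apply: parentP.
  apply/subset_leq_card/subsetP => _ /imsetP [a Aa ->].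
  by rewrite inE; apply/existsP; exists a; apply: parentP.
have A_le_NC : #|A| <= #|~: N|.
  apply/subset_leq_card/subsetP => a Aa; rewrite !inE negb_exists.
  by apply/forallP => b; apply: sinkA.
by rewrite -addnn -(cardsC N) leq_add.
Qed.

Lemma half_cards_cover_disjoint (A B : {set T}) :
  A :|: B = setT -> #|A|.*2 <= #|T| -> #|B|.*2 <= #|T| -> [disjoint A & B].
Proof.
move=> AB_cover A_half B_half; rewrite -setI_eq0 -cards_eq0.
have := cardsUI A B; rewrite AB_cover cardsT; lia.
Qed.

End HalfCards.

Section TemporalClique.
Variables (T : finType) (lam : T -> T -> nat).
Hypothesis clique : simple_temporal_clique lam.

Lemma lam_sym x y : lam x y = lam y x.
Proof. exact: clique.1. Qed.

Lemma lam_neq x y z : y != x -> z != x -> y != z -> lam x y != lam x z.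
Proof. by move=> yx zx yz; apply: clique.2 => //; rewrite eq_sym. Qed.

Lemma exists_neq (a : T) : 1 < #|T| -> exists w, w != a.
Proof.
move=> T2; have /card_gt0P [w] : 0 < #|predC1 a| by rewrite cardC1 -subn1 subn_gt0.
by exists w.
Qed.

Lemma exists_emin a : 1 < #|T| -> exists w, is_emin lam a w.
Proof.
move=> /(exists_neq a) [w0 w0a].
exists [arg min_(w < w0 | w != a) lam a w]; case: arg_minnP => // m ma m_min.
by split=> // x xa xm; rewrite ltn_neqAle m_min // andbT lam_neq // eq_sym.
Qed.

Lemma exists_emax a : 1 < #|T| -> exists w, is_emax lam a w.
Proof.
move=> /(exists_neq a) [w0 w0a].
exists [arg max_(w > w0 | w != a) lam a w]; case: arg_maxnP => // m ma m_max.
by split=> // x xa xm; rewrite ltn_neqAle lam_neq //=; apply: m_max.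
Qed.

Section Arcs.
Variable R : T -> T -> Prop.

Lemma exists_max_outarc a b :
  (forall u, R a u -> u != a) -> R a b -> exists m, max_outarc lam R a m.
Proof.
move=> R_irr Rab.
have [m /asboolP Ram m_max] :=
  @arg_maxnP _ b (fun u => `[< R a u >]) (lam a) (asboolT Rab).
exists m; split=> // u Rau um; rewrite ltn_neqAle lam_neq ?R_irr //=.
exact/m_max/asboolP.
Qed.

Lemma exists_min_inarc a b :
  (forall u, R u a -> u != a) -> R b a -> exists m, min_inarc lam R a m.
Proof.
move=> R_irr Rba.
have [m /asboolP Rma m_min] :=
  @arg_minnP _ b (fun u => `[< R u a >]) (lam^~ a) (asboolT Rba).
exists m; split=> // u Rua um; rewrite ltn_neqAle (m_min u (asboolT Rua)) andbT.
by rewrite !(lam_sym _ a) lam_neq ?R_irr // eq_sym.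
Qed.

Lemma not_max_outarc a b :
  (forall u, R a u -> u != a) -> R a b -> ~ max_outarc lam R a b ->
  exists2 u, R a u & lam a b < lam a u.
Proof.
move=> R_irr Rab /not_andP [//|/existsNP [u /not_implyP [Rau /not_implyP [ub]]]].
move=> /negP; rewrite -leqNgt => le_ba; exists u => //.
by rewrite ltn_neqAle le_ba andbT eq_sym lam_neq ?R_irr.
Qed.

Lemma not_min_inarc a b :
  (forall u, R u a -> u != a) -> R b a -> ~ min_inarc lam R a b ->
  exists2 u, R u a & lam u a < lam b a.
Proof.
move=> R_irr Rba /not_andP [//|/existsNP [u /not_implyP [Rua /not_implyP [ub]]]].
move=> /negP; rewrite -leqNgt => le_ub; exists u => //.
by rewrite ltn_neqAle le_ub andbT !(lam_sym _ a) lam_neq ?R_irr.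
Qed.

Lemma max_outarc_uniq a m m' :
  max_outarc lam R a m -> max_outarc lam R a m' -> m = m'.
Proof.
move=> [Ram m_max] [Ram' m'_max]; case: (eqVneq m m') => // mm'.
have m'm : m' != m by rewrite eq_sym.
by have := ltn_trans (m_max _ Ram' m'm) (m'_max _ Ram mm'); rewrite ltnn.
Qed.

Lemma min_inarc_uniq a m m' :
  min_inarc lam R a m -> min_inarc lam R a m' -> m = m'.
Proof.
move=> [Rma m_min] [Rm'a m'_min]; case: (eqVneq m m') => // mm'.
have m'm : m' != m by rewrite eq_sym.
by have := ltn_trans (m_min _ Rm'a m'm) (m'_min _ Rma mm'); rewrite ltnn.
Qed.

End Arcs.

Definition reaches_emin (x : T) : Prop :=
  exists y s, y != x /\ is_journey lam x s /\ size s <= 2 /\ jend x s = y /\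
    is_emin lam y (jpenult x s).

Definition reached_from_emax (x : T) : Prop :=
  exists z s, z != x /\ is_journey lam z s /\ size s <= 2 /\ jend z s = x /\
    is_emax lam z (jsecond z s).

Lemma reaches_emin1 x y : is_emin lam y x -> reaches_emin x.
Proof.
move=> yx; have [xy _] := yx; exists y, [:: y].
by rewrite /is_journey /= andbT eq_sym xy.
Qed.

Lemma reaches_emin2 x v u :
  x != v -> lam x v < lam v u -> is_emin lam u v -> reaches_emin x.
Proof.
move=> xv lt_xvu uv; exists u, [:: v; u]; split.
  by apply: contraTneq lt_xvu => ->; rewrite lam_sym ltnn.
by rewrite /is_journey /= xv lt_xvu uv.1.
Qed.

Lemma reached_from_emax1 x z : is_emax lam z x -> reached_from_emax x.
Proof. by move=> zx; exists z, [:: x]; rewrite /is_journey /= andbT eq_sym zx.1. Qed.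

Lemma reached_from_emax2 x z a :
  is_emax lam z a -> a != x -> lam z a < lam a x -> reached_from_emax x.
Proof.
move=> za ax lt_zax; exists z, [:: a; x]; split.
  by apply: contraTneq lt_zax => ->; rewrite lam_sym ltnn.
by rewrite /is_journey /= ax lt_zax eq_sym za.1.
Qed.

Section Forward.
Variable Em : T -> T -> Prop.
Hypothesis Em_spec : Eminus_spec lam Em.

Lemma Em_emin u v : Em u v -> is_emin lam v u.
Proof. exact: Em_spec.1. Qed.

Lemma Em_out_neq a u : Em a u -> u != a.
Proof. by move=> /Em_emin [au _]; rewrite eq_sym. Qed.

Lemma emitter_no_outarc a b : emitter lam Em a -> ~ Em a b.
Proof.
move=> em_a Eab; have [_|deg1] := pselect (outdeg_ge2 Em a).
  have [m max_m] := exists_max_outarc (@Em_out_neq a) Eab.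
  by apply: (em_a m); left; split; [case: max_m | right].
by apply: (em_a b); left; split=> //; left.
Qed.

Lemma emitter_emin_arc a w : emitter lam Em a -> is_emin lam a w -> Em w a.
Proof.
move=> em_a aw; have [wa|wNa] := pselect (is_emin lam w a).
  by apply/(Em_spec.2.2 _ _ aw wa); apply: emitter_no_outarc.
exact: Em_spec.2.1.
Qed.

Lemma emitter_max_outarc a b :
  emitter lam Em a -> Em b a -> outdeg_ge2 Em b -> max_outarc lam Em b a.
Proof.
move=> em_a Eba deg2; apply: contrapT => Nmax; apply: (em_a b).
by right; split=> //; split=> //; split=> // u; apply: emitter_no_outarc.
Qed.

Lemma emitter_arc_inj a a' b :
  emitter lam Em a -> emitter lam Em a' -> Em b a -> Em b a' -> a = a'.
Proof.
move=> em_a em_a' Eba Eba'; case: (eqVneq a a') => // aa'.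
have deg2 : outdeg_ge2 Em b by exists a, a'.
by apply: (@max_outarc_uniq Em b); apply: emitter_max_outarc.
Qed.

Lemma card_emitters :
  1 < #|T| -> #|[set v | `[< emitter lam Em v >]]|.*2 <= #|T|.
Proof.
move=> T2; apply: (@card_sinks_private_parent _ (fun b a => `[< Em b a >])).
- move=> a b /[!inE] /asboolP em_a; apply/asboolPn; exact: emitter_no_outarc.
- move=> a /[!inE] /asboolP em_a; have [w aw] := exists_emin a T2.
  by exists w; apply/asboolP/(emitter_emin_arc em_a aw).
- move=> a a' b /[!inE] /asboolP em_a /asboolP em_a' /asboolP Eba /asboolP Eba'.
  exact: emitter_arc_inj em_a em_a' Eba Eba'.
Qed.

Lemma non_emitter_reaches_emin x : ~ emitter lam Em x -> reaches_emin x.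
Proof.
move=> /existsNP [b /contrapT [[Exb _] | [Ebx [_ [Nmax _]]]]].
  exact: reaches_emin1 (Em_emin Exb).
have [u Ebu lt_bxu] := not_max_outarc (@Em_out_neq b) Ebx Nmax.
apply: (reaches_emin2 _ _ (Em_emin Ebu)); first exact: Em_out_neq Ebx.
by rewrite lam_sym.
Qed.

End Forward.

Section Backward.
Variable Ep : T -> T -> Prop.
Hypothesis Ep_spec : Eplus_spec lam Ep.

Lemma Ep_emax v u : Ep v u -> is_emax lam v u.
Proof. exact: Ep_spec.1. Qed.

Lemma Ep_in_neq a u : Ep u a -> u != a.
Proof. by move=> /Ep_emax [au _]; rewrite eq_sym. Qed.

Lemma collector_no_inarc c b : collector lam Ep c -> ~ Ep b c.
Proof.
move=> col_c Ebc; have [_|deg1] := pselect (indeg_ge2 Ep c).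
  have [m min_m] := exists_min_inarc (@Ep_in_neq c) Ebc.
  by apply: (col_c m); left; split; [case: min_m | right].
by apply: (col_c b); left; split=> //; left.
Qed.

Lemma collector_emax_arc c q : collector lam Ep c -> is_emax lam c q -> Ep c q.
Proof.
move=> col_c cq; have [qc|qNc] := pselect (is_emax lam q c).
  by apply/(Ep_spec.2.2 _ _ cq qc); apply: collector_no_inarc.
exact: Ep_spec.2.1.
Qed.

Lemma collector_min_inarc c b :
  collector lam Ep c -> Ep c b -> indeg_ge2 Ep b -> min_inarc lam Ep b c.
Proof.
move=> col_c Ecb deg2; apply: contrapT => Nmin; apply: (col_c b).
by right; split=> //; split=> //; split=> // u; apply: collector_no_inarc.
Qed.

Lemma collector_arc_inj c c' b :
  collector lam Ep c -> collector lam Ep c' -> Ep c b -> Ep c' b -> c = c'.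
Proof.
move=> col_c col_c' Ecb Ec'b; case: (eqVneq c c') => // cc'.
have deg2 : indeg_ge2 Ep b by exists c, c'.
by apply: (@min_inarc_uniq Ep b); apply: collector_min_inarc.
Qed.

Lemma card_collectors :
  1 < #|T| -> #|[set v | `[< collector lam Ep v >]]|.*2 <= #|T|.
Proof.
move=> T2; apply: (@card_sinks_private_parent _ (fun b a => `[< Ep a b >])).
- move=> a b /[!inE] /asboolP col_a; apply/asboolPn; exact: collector_no_inarc.
- move=> a /[!inE] /asboolP col_a; have [w aw] := exists_emax a T2.
  by exists w; apply/asboolP/(collector_emax_arc col_a aw).
- move=> a a' b /[!inE] /asboolP col_a /asboolP col_a' /asboolP Eab /asboolP Ea'b.
  exact: collector_arc_inj col_a col_a' Eab Ea'b.
Qed.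

Lemma non_collector_reached_from_emax x :
  ~ collector lam Ep x -> reached_from_emax x.
Proof.
move=> /existsNP [a /contrapT [[Eax _] | [Exa [_ [Nmin _]]]]].
  exact: reached_from_emax1 (Ep_emax Eax).
have [u Eua lt_uax] := not_min_inarc (@Ep_in_neq a) Exa Nmin.
apply: (reached_from_emax2 (Ep_emax Eua)); first by rewrite eq_sym (Ep_in_neq Exa).
by rewrite (lam_sym a).
Qed.

End Backward.

Lemma emitter_not_collector (Em Ep : T -> T -> Prop) :
  Eminus_spec lam Em -> Eplus_spec lam Ep -> 1 < #|T| ->
  (forall v, emitter lam Em v \/ collector lam Ep v) ->
  forall a, emitter lam Em a -> ~ collector lam Ep a.
Proof.
move=> Em_spec Ep_spec T2 cover a em_a col_a.
set X := [set v | `[< emitter lam Em v >]].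
set Y := [set v | `[< collector lam Ep v >]].
have XY_cover : X :|: Y = setT.
  by apply/setP => v; rewrite !inE; case: (cover v) => /asboolP ->; rewrite ?orbT.
have XY_disj : [disjoint X & Y] := half_cards_cover_disjoint XY_cover
  (card_emitters Em_spec T2) (card_collectors Ep_spec T2).
have aX : a \in X by rewrite inE; apply: asboolT.
by have := disjointFr XY_disj aX; rewrite inE (asboolT col_a).
Qed.

End TemporalClique.

Theorem lemma7 (T : finType) (lam : T -> T -> nat) (Em Ep : T -> T -> Prop) :
  simple_temporal_clique lam ->
  Eminus_spec lam Em ->
  Eplus_spec lam Ep ->
  (forall v : T, emitter lam Em v \/ collector lam Ep v) ->
  ((exists u v : T, emitter lam Em u /\ is_emin lam u v /\
      ~ (forall x : T, emitter lam Em x -> x != v -> lam v u <= lam v x)) ->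
     exists x : T, two_hop_dismountable lam x) /\
  ((exists c y : T, collector lam Ep c /\ is_emax lam c y /\
      ~ (forall z : T, collector lam Ep z -> z != y -> lam y z <= lam y c)) ->
     exists x : T, two_hop_dismountable lam x).
Proof.
move=> clique Em_spec Ep_spec cover.
have T2 (a b : T) : b != a -> 1 < #|T|.
  by move=> ba; apply/card_gt1P; exists a, b; rewrite eq_sym.
split.
- move=> [u [v [_ [uv /existsNP [x]]]]].
  move=> /not_implyP [em_x /not_implyP [xv /negP]]; rewrite -ltnNge => lt_vxu.
  exists x; split.
    by apply: (reaches_emin2 clique xv _ uv); rewrite (lam_sym clique x).
  apply: (non_collector_reached_from_emax clique Ep_spec).
  by apply: (emitter_not_collector clique Em_spec Ep_spec (T2 _ _ uv.1)).
- move=> [c [y [_ [cy /existsNP [z]]]]].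
  move=> /not_implyP [col_z /not_implyP [zy /negP]]; rewrite -ltnNge => lt_ycz.
  exists z; split.
    apply: (non_emitter_reaches_emin clique Em_spec) => em_z.
    exact: (emitter_not_collector clique Em_spec Ep_spec (T2 _ _ cy.1) cover em_z).
  apply: (reached_from_emax2 clique cy); first by rewrite eq_sym.
  by rewrite (lam_sym clique c).
Qed.
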